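(* The kernel of the linear map $\mathcal{D}(\Lambda_{n,d})\to\mathcal{D}(\Lambda_{n,d})$, $y\mapsto Xy$ (the action of $X$ on the left regular module), has dimension $n^2d$.
   Context: $k$ is an algebraically closed field; $n,d$ integers with $d\geqslant2$, $d\mid n$, $\mathrm{char}\,k\nmid n$; $q$ a primitive $d$-th root of unity. $\Lambda_{n,d}$ is the path algebra of the cyclic quiver with vertices $e_i$ and arrows $a_i:e_i\to e_{i+1}$ ($i\in\mathbb{Z}_n$) modulo all paths of length $d$; $\gamma_i^m=a_{i+m-1}\cdots a_i$. $\mathcal{D}(\Lambda_{n,d})$ is the Drinfel'd double of the Hopf algebra $\Lambda_{n,d}$; concretely it has basis $G^iX^j\gamma_\ell^m$ ($i,\ell\in\mathbb{Z}_n$, $0\leqslant j,m\leqslant d-1$) and is generated by $G,X,e_i,a_i$ with relations $G^n=1$, $X^d=0$, $GX=q^{-1}XG$, products of paths as in $\Lambda_{n,d}$, $\gamma_\ell^mG=q^{-m}G\gamma_\ell^m$, $\gamma_\ell^mX=q^{-m}X\gamma_{\ell+1}^m-q^{-m}(m)_q\gamma_{\ell+1}^{m-1}+q^{\ell+1-m}(m)_qG\gamma_{\ell+1}^{m-1}$, where $(m)_q=1+q+\cdots+q^{m-1}$. *)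

From HB Require Import structures.
From mathcomp Require Import all_boot all_order all_algebra all_field.
Set Implicit Arguments. Unset Strict Implicit. Unset Printing Implicit Defensive.
Import GRing.Theory.
Local Open Scope ring_scope.

Section Double.
Variables (k : fieldType) (A : falgType k) (n d : nat) (q : k).
Variables (G X : A) (e a : 'I_n -> A).

Definition shiftI (l : 'I_n) (t : nat) : 'I_n := iter t (@ordS n) l.

Fixpoint apath (l : 'I_n) (m : nat) : A :=
  match m with
  | 0 => a l
  | m'.+1 => a (shiftI l m) * apath l m'
  end.

Definition gam (l : 'I_n) (m : nat) : A :=
  if m is m'.+1 then apath l m' else e l.

Definition qint (m : nat) : k := \sum_(t < m) q ^+ t.

Definition dbasis (p : 'I_n * 'I_d * 'I_n * 'I_d) : A :=
  let: (i, j, l, m) := p in G ^+ i * X ^+ j * gam l m.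

(* A is (a presentation of) the Drinfel'd double D(Lambda_{n,d}):
   generated by G, X, e_i, a_i with the listed relations, and with basis
   G^i X^j gamma_l^m (i,l in Z_n, 0 <= j,m <= d-1). *)
Definition is_double_Lambda : Prop :=
  [/\ [/\ G ^+ n = 1, X ^+ d = 0 & G * X = q^-1 *: (X * G)],
      (* path algebra Lambda_{n,d} = kQ / (paths of length d), with unit 1 *)
      [/\ \sum_(i < n) e i = 1,
          forall i j : 'I_n, e i * e j = if i == j then e i else 0,
          forall i j : 'I_n, a i * e j = if i == j then a i else 0,
          forall i j : 'I_n, e j * a i = if j == ordS i then a i else 0
        & (forall i j : 'I_n, j != ordS i -> a j * a i = 0)
          /\ (forall l : 'I_n, gam l d = 0)],
      forall (l : 'I_n) (m : nat), gam l m * G = q ^- m *: (G * gam l m),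
      forall (l : 'I_n) (m : nat), (m < d)%N ->
        gam l m * X = q ^- m *: (X * gam (ordS l) m)
                      - (q ^- m * qint m) *: gam (ordS l) m.-1
                      + (q ^ (l%:Z + 1 - m%:Z) * qint m) *: (G * gam (ordS l) m.-1)
    & basis_of fullv [seq dbasis p | p : 'I_n * 'I_d * 'I_n * 'I_d]].

End Double.

(* Left multiplication by X sends the basis vector G^i X^j gamma_l^m to
   q^i G^i X^(j+1) gamma_l^m when j < d - 1 (because X G^i = q^i G^i X), and
   to 0 when j = d - 1.  Its image is therefore spanned by the basis vectors
   with j >= 1, of which there are n^2 d (d - 1), and rank-nullity leaves a
   kernel of dimension n^2 d^2 - n^2 d (d - 1) = n^2 d. *)

From HB Require Import structures.
From mathcomp Require Import all_boot all_order all_algebra all_field.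
Set Implicit Arguments. Unset Strict Implicit. Unset Printing Implicit Defensive.
Import GRing.Theory.
Local Open Scope ring_scope.

Lemma subseq_free (K : fieldType) (V : vectType K) (X Y : seq V) :
  subseq X Y -> free Y -> free X.
Proof. by case/perm_to_subseq=> Z /perm_free ->; apply: catl_free. Qed.

Lemma dim_span_image_free (K : fieldType) (V : vectType K) (P : finType)
    (b : P -> V) (S : {pred P}) :
  free [seq b p | p : P] -> \dim <<[seq b p | p in S]>> = #|S|.
Proof.
move=> freeP; have freeS : free [seq b p | p in S].
  by apply: subseq_free freeP; apply/map_subseq; rewrite enumT; apply: filter_subseq.
by rewrite (eqnP freeS) size_map -cardE.
Qed.

Lemma mulr_expr_skew (R : comNzRingType) (A : algType R) (c : R) (x y : A) :
  x * y = c *: (y * x) -> forall i, x * y ^+ i = c ^+ i *: (y ^+ i * x).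
Proof.
move=> xy; elim=> [|i IHi]; first by rewrite !expr0 mulr1 mul1r scale1r.
by rewrite !exprSr mulrA IHi -scalerAl -[_ * x * y]mulrA xy -scalerAr scalerA mulrA.
Qed.

Section LeftMultiplicationByX.

Variables (k : fieldType) (A : falgType k) (n d : nat) (q : k).
Variables (G X : A) (e a : 'I_n -> A).
Hypotheses (q_neq0 : q != 0) (Xd : X ^+ d = 0) (XG : X * G = q *: (G * X)).

Local Notation index := ('I_n * 'I_d * 'I_n * 'I_d)%type.
Local Notation b := (dbasis G X e a).

Hypothesis basisA : basis_of fullv [seq b p | p : index].

Definition Xdeg_pos : {set index} := [set p : index | p.1.1.2 != 0%N :> nat].

Lemma amullX_dbasis (i : 'I_n) (j : 'I_d) (l : 'I_n) (m : 'I_d) :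
  amull X (b (i, j, l, m)) = q ^+ i *: (G ^+ i * X ^+ j.+1 * gam e a l m).
Proof.
by rewrite lfunE /= !mulrA (mulr_expr_skew XG) -!scalerAl -(mulrA _ X) -exprS.
Qed.

Lemma limg_amullX : limg (amull X) = <<[seq b p | p in Xdeg_pos]>>%VS.
Proof.
apply/eqP; rewrite eqEsubv; apply/andP; split.
  rewrite -(span_basis basisA) limg_span.
  apply/span_subvP => _ /mapP[_ /mapP[[[[i j] l] m] _ ->] ->].
  rewrite amullX_dbasis; case: (ltnP j.+1 d) => [jd | dj].
    apply/memvZ/memv_span/imageP.
    by exists (i, Ordinal jd, l, m); rewrite ?inE.
  by rewrite (@anti_leq j.+1 d) ?dj ?ltn_ord // Xd mulr0 mul0r scaler0 mem0v.
apply/span_subvP => _ /imageP[[[[i j] l] m] + ->]; rewrite inE => j_neq0.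
have j'd : (j.-1 < d)%N by apply: leq_ltn_trans (leq_pred j) (ltn_ord j).
have -> : b (i, j, l, m) = q ^- i *: amull X (b (i, Ordinal j'd, l, m)).
  by rewrite amullX_dbasis /= prednK ?lt0n // scalerA mulVf ?expf_neq0 ?scale1r.
by apply/memvZ/memv_img/memvf.
Qed.

Lemma dim_lker_amullX : \dim (lker (amull X)) = #|~: Xdeg_pos|.
Proof.
have freeA := basis_free basisA.
have := limg_ker_dim (amull X) fullv.
rewrite capfv limg_amullX -[in RHS](span_basis basisA) !dim_span_image_free //.
by rewrite -(cardsC Xdeg_pos) addnC => /addnI.
Qed.

End LeftMultiplicationByX.

Lemma card_Xdeg_pos_compl n d : (0 < d)%N -> #|~: Xdeg_pos n d| = (n ^ 2 * d)%N.
Proof.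
move=> d_gt0; have -> : ~: Xdeg_pos n d =
    setX (setX (setX [set: 'I_n] [set Ordinal d_gt0]) [set: 'I_n]) [set: 'I_d].
  by apply/setP => -[[[i j] l] m]; rewrite !inE negbK -val_eqE !andbT.
by rewrite !cardsX !cardsT cards1 !card_ord muln1 mulnn.
Qed.

Theorem mainTheorem10 (k : closedFieldType) (n d : nat) (q : k)
  (Hd : (2 <= d)%N) (Hdn : (d %| n)%N) (Hchar : n%:R != 0 :> k)
  (Hq : d.-primitive_root q)
  (A : falgType k) (G X : A) (e a : 'I_n -> A)
  (HA : @is_double_Lambda k A n d q G X e a) :
  \dim (lker (amull X)) = (n ^ 2 * d)%N.
Proof.
case: HA => [[_ Xd GX] _ _ _ basisA].
have d_gt0 : (0 < d)%N by apply: leq_trans Hd.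
have q_neq0 : q != 0 by rewrite (prim_root_eq0 Hq) -lt0n.
have XG : X * G = q *: (G * X) by rewrite GX scalerA mulfV ?scale1r.
by rewrite (dim_lker_amullX q_neq0 Xd XG basisA) card_Xdeg_pos_compl.
Qed.
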